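(* Let $\mathcal{X}$ be a Banach space with an unconditional basis $\mathcal{E}=\{e_n\}_{n\ge1}$, ordered by $\mathcal{E}$, and let $T$ be a positive operator whose matrix $A=(a_{n,m})_{n,m\in\mathbb{N}}$ with respect to $\mathcal{E}$ is tridiagonal. Then $T$ has no non-trivial closed invariant ideals if and only if $a_{n+1,n}\neq0$ and $a_{n,n+1}\ne0$ for every $n\in\mathbb{N}$.
   Context: The matrix of $T$ is given by $Te_m=\sum_n a_{n,m}e_n$; $T$ positive means $a_{n,m}\ge0$ for all $n,m$. Tridiagonal means $a_{n,m}=0$ whenever $|n-m|>1$. An ideal is a linear subspace $M$ such that $|x|\le|y|$ coordinatewise and $y\in M$ imply $x\in M$, where $|x|=\sum_n|x_n|e_n$. Non-trivial means different from $\{0\}$ and $\mathcal{X}$. *)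

From HB Require Import structures.
From mathcomp Require Import all_boot all_order all_algebra.
From mathcomp Require Import all_classical all_reals all_analysis.
Set Implicit Arguments. Unset Strict Implicit. Unset Printing Implicit Defensive.
Import Order.TTheory GRing.Theory Num.Theory.
Import numFieldNormedType.Exports.
Local Open Scope classical_set_scope.
Local Open Scope ring_scope.

Section Defs.
Context {R : realType} {X : normedModType R}.

Definition unc_expansion (e : nat -> X) (c : nat -> R) (x : X) : Prop :=
  forall eps : R, 0 < eps -> exists s0 : seq nat,
    forall s : seq nat, uniq s -> {subset s0 <= s} ->
      `| x - \sum_(n <- s) c n *: e n | < eps.

Definition unconditional_basis (e : nat -> X) : Prop :=
  forall x : X, exists! c : nat -> R, unc_expansion e c x.

(* Ideal w.r.t. the coordinatewise order induced by the basis e: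
   a linear subspace M such that |x| <= |y| coordinatewise and y in M
   imply x in M. *)
Definition is_ideal (e : nat -> X) (M : set X) : Prop :=
  [/\ M 0,
      (forall x y, M x -> M y -> M (x + y)),
      (forall (k : R) x, M x -> M (k *: x)) &
      (forall x y (c d : nat -> R), unc_expansion e c x -> unc_expansion e d y ->
         (forall n, `|c n| <= `|d n|) -> M y -> M x)].

End Defs.

(* The closed ideals we need are the bands vanishing_on P, of vectors whose
   coordinates vanish on an index set P.  They are ideals for purely
   algebraic reasons, but their closedness needs continuity of the
   coordinate functionals, which is where completeness enters: by Baire,
   one of the sets {x | all partial sums of x have norm <= j} is dense in a
   ball; rescaling and summing a geometric series of approximations then
   gives |x_k| |e_k| <= K |x| (coord_bound), as in the open mapping theorem.

   - If a_{n+1,n} = 0 (resp. a_{n,n+1} = 0), the matrix decouples along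
     P = {k > n} (resp. {k <= n}), and vanishing_on P is a nontrivial closed
     T-invariant ideal (band_nontrivial_invariant).
   - Conversely, a nonzero invariant ideal contains a basis vector, then by
     the nonzero off-diagonal entries all of them, and being closed it is
     everything (invariant_ideal_full). *)

From HB Require Import structures.
From mathcomp Require Import all_boot all_order all_algebra.
From mathcomp Require Import all_classical all_reals all_analysis.
From mathcomp Require Import ring lra zify.
Import Order.TTheory GRing.Theory Num.Theory.
Import numFieldNormedType.Exports.
Local Open Scope classical_set_scope.
Local Open Scope ring_scope.
Set Implicit Arguments. Unset Strict Implicit. Unset Printing Implicit Defensive.

Section expansions.
Context {R : realType} {X : normedModType R} (e : nat -> X).

Lemma expansionD c d x y :
  unc_expansion e c x -> unc_expansion e d y ->
  unc_expansion e (fun n => c n + d n) (x + y).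
Proof.
move=> hc hd eps eps0.
have [s1 H1] := hc _ (divr_gt0 eps0 (ltr0Sn _ 1)).
have [s2 H2] := hd _ (divr_gt0 eps0 (ltr0Sn _ 1)).
exists (s1 ++ s2) => s us sub.
rewrite (_ : _ - _ = (x - \sum_(n <- s) c n *: e n) + (y - \sum_(n <- s) d n *: e n)).
  apply: le_lt_trans (ler_normD _ _) _; rewrite (splitr eps).
  by apply: ltrD; [apply: H1 | apply: H2] => // z zs; apply: sub; rewrite mem_cat zs ?orbT.
rewrite addrACA -opprD -big_split /=; congr (_ - _).
by apply: eq_bigr => i _; rewrite scalerDl.
Qed.

Lemma expansionZ c x (k : R) :
  unc_expansion e c x -> unc_expansion e (fun n => k * c n) (k *: x).
Proof.
move=> hc eps eps0.
have k1 : 0 < `|k| + 1 by rewrite ltr_wpDl.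
have [s0 H0] := hc _ (divr_gt0 eps0 k1).
exists s0 => s us sub.
rewrite (_ : k *: x - _ = k *: (x - \sum_(n <- s) c n *: e n)); last first.
  by rewrite scalerBr scaler_sumr; congr (_ - _); apply: eq_bigr => i _; rewrite scalerA.
rewrite normrZ; apply: (le_lt_trans (y := (`|k| + 1) * `|x - \sum_(n <- s) c n *: e n|)).
  by rewrite ler_wpM2r // lerDl.
by rewrite mulrC -ltr_pdivlMr //; exact: H0.
Qed.

Lemma expansion_basis_vector k : unc_expansion e (fun n => (n == k)%:R) (e k).
Proof.
move=> eps eps0; exists [:: k] => s us sub.
rewrite (bigD1_seq k) ?sub ?mem_seq1 //= eqxx scale1r big1 ?addr0 ?subrr ?normr0 //.
by move=> i /negbTE ->; rewrite scale0r.
Qed.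

Lemma expansion0 : unc_expansion e (fun n => 0) 0.
Proof.
move=> eps eps0; exists [::] => s us sub.
by rewrite big1 ?subrr ?normr0 // => i _; rewrite scale0r.
Qed.

Lemma expansion_inj c x y :
  unc_expansion e c x -> unc_expansion e c y -> x = y.
Proof.
move=> hx hy; apply/eqP; rewrite -subr_eq0 -normr_le0.
apply/ler_addgt0Pr => eps eps0; rewrite add0r.
have [s1 H1] := hx _ (divr_gt0 eps0 (ltr0Sn _ 1)).
have [s2 H2] := hy _ (divr_gt0 eps0 (ltr0Sn _ 1)).
set s := undup (s1 ++ s2).
have us : uniq s := undup_uniq _.
rewrite (_ : x - y = (x - \sum_(n <- s) c n *: e n) - (y - \sum_(n <- s) c n *: e n)).
  apply: ltW; apply: le_lt_trans (ler_normB _ _) _; rewrite (splitr eps).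
  by apply: ltrD; [apply: H1 | apply: H2] => // z zs; rewrite mem_undup mem_cat zs ?orbT.
by rewrite opprB addrA subrK.
Qed.

End expansions.

Section coordinates.
Context {R : realType} {X : normedModType R} {e : nat -> X}.
Hypothesis basis : unconditional_basis e.

Definition coord (x : X) : nat -> R := sval (cid (basis x)).

Lemma coordP x : unc_expansion e (coord x) x.
Proof. exact: (proj1 (svalP (cid (basis x)))). Qed.

Lemma coordE x c : unc_expansion e c x -> coord x = c.
Proof. exact: (proj2 (svalP (cid (basis x)))). Qed.

Lemma coord0 n : coord 0 n = 0.
Proof. by rewrite (coordE (expansion0 e)). Qed.

Lemma coordD x y n : coord (x + y) n = coord x n + coord y n.
Proof. by rewrite (coordE (expansionD (coordP x) (coordP y))). Qed.

Lemma coordZ (k : R) x n : coord (k *: x) n = k * coord x n.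
Proof. by rewrite (coordE (expansionZ k (coordP x))). Qed.

Lemma coordB x y n : coord (x - y) n = coord x n - coord y n.
Proof. by rewrite -scaleN1r coordD coordZ mulN1r. Qed.

Lemma coord_basis_vector k n : coord (e k) n = (n == k)%:R.
Proof. by rewrite (coordE (expansion_basis_vector e k)). Qed.

Lemma coord_sum (I : Type) (s : seq I) (v : I -> X) n :
  coord (\sum_(i <- s) v i) n = \sum_(i <- s) coord (v i) n.
Proof.
elim: s => [|i s IH]; first by rewrite !big_nil coord0.
by rewrite !big_cons coordD IH.
Qed.

Lemma coord_eq0 x : (forall n, coord x n = 0) -> x = 0.
Proof.
move=> h; apply: (expansion_inj (coordP x)).
by rewrite (_ : coord x = fun=> 0); [exact: expansion0 | exact: funext].
Qed.

Lemma basis_vector_neq0 k : e k != 0.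
Proof.
apply/eqP => ek; have := coord_basis_vector k k.
by rewrite ek coord0 eqxx => /eqP; rewrite eq_sym oner_eq0.
Qed.

Definition psum (s : seq nat) (x : X) : X := \sum_(n <- s) coord x n *: e n.

Lemma psumD s x y : psum s (x + y) = psum s x + psum s y.
Proof. by rewrite /psum -big_split; apply: eq_bigr => i _; rewrite coordD scalerDl. Qed.

Lemma psumZ s k x : psum s (k *: x) = k *: psum s x.
Proof. by rewrite /psum scaler_sumr; apply: eq_bigr => i _; rewrite coordZ scalerA. Qed.

Lemma psumB s x y : psum s (x - y) = psum s x - psum s y.
Proof. by rewrite psumD -scaleN1r psumZ scaleN1r. Qed.

Definition sums_bounded (x : X) (b : R) : Prop :=
  forall s, uniq s -> `|psum s x| <= b.

Lemma sums_bounded_le x a b : sums_bounded x a -> a <= b -> sums_bounded x b.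
Proof. by move=> h ab s us; apply: le_trans (h s us) ab. Qed.

Lemma sums_bounded0 : sums_bounded 0 0.
Proof.
move=> s us; rewrite /psum big1 ?normr0 // => i _.
by rewrite coord0 scale0r.
Qed.

Lemma sums_boundedD x y a b :
  sums_bounded x a -> sums_bounded y b -> sums_bounded (x + y) (a + b).
Proof.
move=> hx hy s us; rewrite psumD; apply: le_trans (ler_normD _ _) _.
exact: lerD (hx s us) (hy s us).
Qed.

Lemma sums_boundedZ x k a : sums_bounded x a -> sums_bounded (k *: x) (`|k| * a).
Proof. by move=> hx s us; rewrite psumZ normrZ ler_wpM2l //; exact: hx. Qed.

Lemma sums_boundedN x a : sums_bounded x a -> sums_bounded (- x) a.
Proof.
by move=> /(sums_boundedZ (-1)); rewrite scaleN1r normrN normr1 mul1r.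
Qed.

Lemma sums_bounded_coord x b k : sums_bounded x b -> `|coord x k| * `|e k| <= b.
Proof. by move=> /(_ [:: k] erefl); rewrite /psum big_seq1 normrZ. Qed.

(* Each single vector has bounded partial sums: completing s by the missing
   indices of a finite set s0 gives a sum within 1 of x, and the added terms
   are bounded by the s0-terms. *)
Lemma sums_bounded_exists x : exists b, sums_bounded x b.
Proof.
have [s0 H0] := coordP x ltr01; set t0 := undup s0.
exists (`|x| + 1 + \sum_(n <- t0) `|coord x n| * `|e n|) => s us.
set f := [seq n <- t0 | n \notin s].
have ut : uniq (s ++ f).
  rewrite cat_uniq us filter_uniq ?undup_uniq ?andbT //=.
  by apply/hasPn => n; rewrite mem_filter => /andP[].
have sub : {subset s0 <= s ++ f}.
  move=> n ns0; rewrite mem_cat mem_filter mem_undup ns0 andbT.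
  by case: (n \in s).
have := H0 _ ut sub; rewrite big_cat /= -/(psum s x) -/(psum f x) => near_x.
rewrite -(addrK (psum f x) (psum s x)); apply: le_trans (ler_normB _ _) _.
apply: lerD.
  rewrite -[psum s x + _](subKr x); apply: le_trans (ler_normB _ _) _.
  by rewrite lerD2l ltW.
apply: le_trans (ler_norm_sum _ _ _) _.
rewrite /f big_filter [leLHS]big_mkcond /=; apply: ler_sum => n _.
by case: ifP => _; rewrite ?normrZ ?mulr_ge0.
Qed.

End coordinates.

Section ideals.
Context {R : realType} {X : normedModType R} {e : nat -> X}.
Hypothesis basis : unconditional_basis e.
Local Notation coord := (coord basis).

Definition vanishing_on (P : nat -> bool) : set X :=
  [set x | forall k, P k -> coord x k = 0].

Lemma vanishing_ideal P : is_ideal e (vanishing_on P).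
Proof.
split.
- by move=> k _; rewrite coord0.
- by move=> x y hx hy k Pk; rewrite coordD hx ?hy ?addr0.
- by move=> c x hx k Pk; rewrite coordZ hx ?mulr0.
- move=> x y c d hc hd hcd hy k Pk; rewrite (coordE basis hc).
  apply/eqP; rewrite -normr_le0; apply: le_trans (hcd k) _.
  by rewrite -(coordE basis hd) hy // normr0.
Qed.

(* An ideal containing x contains every basis vector in the support of x
   (e_k is dominated by a multiple of x). *)
Lemma ideal_basis_vector M x k :
  is_ideal e M -> M x -> coord x k != 0 -> M (e k).
Proof.
move=> [_ _ hZ hsolid] Mx xk.
apply: (hsolid _ _ _ _ (expansion_basis_vector e k) (coordP basis ((coord x k)^-1 *: x))).
  move=> n; rewrite coordZ; case: eqP => [->|_]; last by rewrite normr0.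
  by rewrite mulVf // normr1.
exact: hZ.
Qed.

Lemma nonzero_coord x : x != 0 -> exists k, coord x k != 0.
Proof.
move=> x0; apply: contrapT => allz; apply: (negP x0); apply/eqP.
apply: (@coord_eq0 _ _ _ basis x) => n.
by apply/eqP; apply: contrapT => /negP xn; apply: allz; exists n.
Qed.

(* A closed ideal containing all basis vectors is the whole space, since it
   contains all partial sums of every expansion. *)
Lemma ideal_full M : is_ideal e M -> closed M -> (forall k, M (e k)) -> M = setT.
Proof.
move=> [M0 hD hZ _] hC he; apply/seteqP; split => // z _.
apply: hC => B /nbhs_ballP[r r0 hr].
have [s0 Hs0] := coordP basis z r0.
exists (psum basis (undup s0) z); split.
  rewrite /psum; elim: (undup s0) => [|i s IH]; first by rewrite big_nil.
  by rewrite big_cons; apply: hD => //; apply: hZ.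
apply: hr; rewrite -ball_normE /ball_.
by apply: Hs0 => [|w]; rewrite ?undup_uniq ?mem_undup.
Qed.

(* With nonzero sub- and superdiagonal, an invariant ideal containing one
   basis vector contains all of them: T e_i has nonzero coordinates at i-1
   and i+1. *)
Lemma invariant_ideal_basis (T : X -> X) (a : nat -> nat -> R) M k :
  (forall m, unc_expansion e (fun n => a n m) (T (e m))) ->
  (forall n, a n.+1 n != 0 /\ a n n.+1 != 0) ->
  is_ideal e M -> (forall x, M x -> M (T x)) -> M (e k) -> forall j, M (e j).
Proof.
move=> hA ha hM hT Mk.
have up i : M (e i) -> M (e i.+1).
  move=> Mi; apply: (ideal_basis_vector hM (hT _ Mi)).
  by rewrite (coordE basis (hA i)); case: (ha i).
have down i : M (e i.+1) -> M (e i).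
  move=> Mi; apply: (ideal_basis_vector hM (hT _ Mi)).
  by rewrite (coordE basis (hA i.+1)); case: (ha i).
have M_e0 : M (e 0%N) by elim: k Mk => // k IH /down.
by elim => // j IH; exact: up.
Qed.

(* Reverse direction: a nonzero closed invariant ideal contains a basis
   vector, hence all of them, hence everything. *)
Lemma invariant_ideal_full (T : X -> X) (a : nat -> nat -> R) (M : set X) :
  (forall m, unc_expansion e (fun n => a n m) (T (e m))) ->
  (forall n, a n.+1 n != 0 /\ a n n.+1 != 0) ->
  is_ideal e M -> closed M -> (forall x, M x -> M (T x)) -> M <> [set 0] -> M = setT.
Proof.
move=> hA ha hM hC hT M0.
have [x Mx x0] : exists2 x, M x & x != 0.
  apply: contrapT => allz; apply: M0; apply/seteqP; split => x /=.
    by move=> Mx; apply/eqP; apply: contrapT => /negP x0; apply: allz; exists x.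
  by move=> ->; case: hM.
have [k xk] := nonzero_coord x0.
apply: (ideal_full hM hC) => j.
exact: (invariant_ideal_basis hA ha hM hT (ideal_basis_vector hM Mx xk) j).
Qed.

End ideals.

Definition halfpow (R : realType) (m : nat) : R := 2^-1 ^+ m.

Section halfpow.
Variable R : realType.
Local Notation hp := (@halfpow R).

Lemma halfpow_gt0 m : 0 < hp m.
Proof. by rewrite exprn_gt0 // invr_gt0. Qed.

Lemma halfpowS m : hp m.+1 = hp m / 2.
Proof. by rewrite /halfpow exprSr. Qed.

Lemma halfpowD m k : hp (m + k) = hp m * hp k.
Proof. by rewrite /halfpow exprD. Qed.

Lemma halfpow_nat m : hp m = ((2 ^ m)%:R)^-1.
Proof. by rewrite /halfpow exprVn natrX. Qed.

Lemma halfpow_le l m : (l <= m)%N -> hp m <= hp l.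
Proof.
move=> lm; rewrite -(subnKC lm) halfpowD; apply: ler_piMr; first exact/ltW/halfpow_gt0.
by apply: exprn_ile1; rewrite ?invr_ge0 ?invf_le1 //; lra.
Qed.

(* k (1/2)^k <= 1, since k < 2^k. *)
Lemma halfpow_size k : k%:R * hp k <= 1.
Proof.
rewrite halfpow_nat ler_pdivrMr ?mul1r ?ltr0n ?expn_gt0 // ler_nat.
exact: ltnW (ltn_expl _ (isT : (1 < 2)%N)).
Qed.

Lemma halfpow_small (d : R) : 0 < d -> exists m, hp m < d.
Proof.
move=> d0; have di : 0 < d^-1 by rewrite invr_gt0.
have := archi_boundP (ltW di).
set m := Num.Def.archi_bound d^-1 => hm.
exists m; rewrite halfpow_nat -[d]invrK ltf_pV2 ?posrE ?invr_gt0 ?ltr0n ?expn_gt0 //.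
apply: lt_le_trans hm _; rewrite ler_nat.
exact: ltnW (ltn_expl _ (isT : (1 < 2)%N)).
Qed.

End halfpow.

(* A real sequence which is Cauchy with a nonincreasing rate b converges,
   and the limit is approached at the same rate (the limit is the supremum
   of the lower bounds u m - b m). *)
Lemma cauchy_rate_limit (R : realType) (u b : nat -> R) :
  (forall l m, (l <= m)%N -> `|u m - u l| <= b l) ->
  (forall l m, (l <= m)%N -> b m <= b l) ->
  exists d, forall m, `|u m - d| <= b m.
Proof.
move=> hu hb.
have b0 m : 0 <= b m by apply: le_trans (hu m m (leqnn m)).
pose E := [set u m - b m | m in setT].
have ubE : ubound E (u 0%N + b 0%N).
  move=> _ [m _ <-]; have := hu 0%N m (leq0n m); rewrite ler_norml.
  by have := b0 m; lra.
exists (sup E) => m; rewrite ler_norml; apply/andP; split; last first.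
  have : u m - b m <= sup E by apply: ub_le_sup; [exists (u 0%N + b 0%N) | exists m].
  lra.
suff : sup E <= u m + b m by lra.
apply: ge_sup; first by exists (u 0%N - b 0%N), 0%N.
move=> _ [l _ <-]; case: (leqP l m) => lm.
  by have := hu l m lm; rewrite ler_norml; have := b0 m; lra.
by have := hu m l (ltnW lm); rewrite ler_norml; have := b0 l; lra.
Qed.

Section coordinate_bound.
Context {R : realType} {X : completeNormedModType R} {e : nat -> X}.
Hypothesis basis : unconditional_basis e.
Local Notation coord := (coord basis).
Local Notation psum := (psum basis).
Local Notation sums_bounded := (sums_bounded basis).
Local Notation hp := (@halfpow R).

(* Baire: X is the union of the sets {x | sums_bounded x j} (by
   sums_bounded_exists), so the closure of one of them contains a ball. *)
Lemma baire_sums_bounded : exists (j : nat) (x0 : X) (r : R), 0 < r /\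
  forall z, `|x0 - z| < r -> closure [set x | sums_bounded x j%:R] z.
Proof.
apply: contrapT => nball.
pose F j := ~` closure [set x | sums_bounded x j%:R].
have F_open_dense j : open (F j) /\ dense (F j).
  split; first by rewrite openC; exact: closed_closure.
  move=> O [y Oy] oO; apply: contrapT => hno; apply: nball.
  have /nbhs_ballP[r r0 hr] : nbhs y O by apply: open_nbhs_nbhs.
  exists j, y, r; split => // z yz; apply: contrapT => nz; apply: hno.
  by exists z; split => //; apply: hr; rewrite -ball_normE.
have [||z [_ hz]] := Baire F_open_dense (O := setT); [by exists 0 | exact: openT |].
have [b hb] := sums_bounded_exists basis z.
apply: (hz (Num.Def.archi_bound `|b|)) => //; apply: subset_closure => /=.
apply: sums_bounded_le hb _; apply: ltW.
by apply: le_lt_trans (archi_boundP (normr_ge0 b)); exact: ler_norm.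
Qed.

(* Consequently every y is approximated arbitrarily well by vectors whose
   partial sums are bounded by K |y|: rescale differences of points of the
   ball around x0 and around x0 + t y. *)
Lemma sums_bounded_approx : exists K : R, 0 < K /\ forall y (eps : R), 0 < eps ->
  exists z, sums_bounded z (K * `|y|) /\ `|y - z| < eps.
Proof.
have [j [x0 [r [r0 hcl]]]] := baire_sums_bounded.
have j0 : 0 <= (j%:R : R) by [].
exists (4 * (j%:R + 1) / r); split; first by apply: divr_gt0 => //; lra.
move=> y eps eps0; have [->|y0] := eqVneq y 0.
  by exists 0; rewrite subrr normr0 mulr0; split => //; exact: sums_bounded0.
have ny : 0 < `|y| by rewrite normr_gt0.
set t := r / (2 * `|y|).
have t0 : 0 < t by rewrite divr_gt0 // mulr_gt0.
have d0 : 0 < eps * t / 2 by rewrite divr_gt0 // mulr_gt0.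
have nty : `|t *: y| = r / 2 by rewrite normrZ gtr0_norm // /t; field; exact: lt0r_neq0.
have cl_u : closure [set x | sums_bounded x j%:R] (x0 + t *: y).
  by apply: hcl; rewrite opprD addNKr normrN nty; lra.
have cl_v : closure [set x | sums_bounded x j%:R] x0.
  by apply: hcl; rewrite subrr normr0.
have [u [Bu bu]] := cl_u _ (nbhsx_ballx _ _ d0).
have [v [Bv bv]] := cl_v _ (nbhsx_ballx _ _ d0).
move: bu bv; rewrite -ball_normE /ball_ => bu bv.
exists (t^-1 *: (u - v)); split.
  apply: sums_bounded_le (sums_boundedZ t^-1 (sums_boundedD Bu (sums_boundedN Bv))) _.
  rewrite gtr0_norm ?invr_gt0 // /t invf_div -subr_ge0.
  have -> : 4 * (j%:R + 1) / r * `|y| - 2 * `|y| / r * (j%:R + j%:R) = 4 * `|y| / r.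
    by field; exact: lt0r_neq0.
  by rewrite divr_ge0 ?mulr_ge0 ?ltW.
have -> : y - t^-1 *: (u - v) = t^-1 *: ((x0 + t *: y - u) - (x0 - v)).
  have -> : x0 + t *: y - u - (x0 - v) = t *: y - (u - v).
    by rewrite [x0 + _]addrC addrAC addrKA opprK opprB addrA addrAC.
  by rewrite [RHS]scalerBr scalerA mulVf ?gt_eqF // scale1r.
rewrite normrZ gtr0_norm ?invr_gt0 // -ltr_pdivlMl ?invr_gt0 // invrK.
apply: le_lt_trans (ler_normB _ _) _.
by rewrite (_ : t * eps = eps * t / 2 + eps * t / 2); [exact: ltrD | field].
Qed.

(* Iterating the approximation on the successive errors y_m (each halving
   the error) writes y as the limit of w_m = y - y_m, where the increments
   w_m - w_l have partial sums bounded by C0 |y| (1/2)^l. *)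
Lemma telescoping_decomposition : exists C0 : R, 0 < C0 /\ forall y : X,
  exists w : nat -> X, [/\ w 0%N = 0, forall m, `|y - w m| <= `|y| * hp m &
    forall l m, (l <= m)%N -> sums_bounded (w m - w l) (C0 * `|y| * hp l)].
Proof.
have [K [K0 hK]] := sums_bounded_approx.
have halving y : exists z, sums_bounded z (K * `|y|) /\ `|y - z| <= `|y| / 2.
  have [->|y0] := eqVneq y 0.
    by exists 0; rewrite subrr normr0 mulr0 mul0r; split => //; exact: sums_bounded0.
  have ny : 0 < `|y| by rewrite normr_gt0.
  have [z [hz1 hz2]] := hK y (`|y| / 2) (divr_gt0 ny (ltr0Sn _ 1)).
  by exists z; split => //; exact: ltW.
have [g hg] := choice halving.
exists (2 * K); split => [|y]; first lra.
pose fix err m := if m is m'.+1 then err m' - g (err m') else y.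
have err_le m : `|err m| <= `|y| * hp m.
  elim: m => [|m IH]; first by rewrite /halfpow expr0 mulr1.
  rewrite /= halfpowS; apply: le_trans (proj2 (hg (err m))) _.
  by rewrite mulrA ler_pM2r //; lra.
exists (fun m => y - err m); split => [|m|l m lm]; first by rewrite subrr.
  by rewrite subKr.
have Cy : 0 <= 2 * K * `|y| by have := normr_ge0 y; nra.
suff incr i : sums_bounded (y - err (l + i)%N - (y - err l))
                           (2 * K * `|y| * (hp l - hp (l + i))).
  rewrite -(subnKC lm); apply: sums_bounded_le (incr _) _.
  by rewrite ler_wpM2l // lerBlDr lerDl ltW ?halfpow_gt0.
elim: i => [|i IH]; first by rewrite addn0 !subrr mulr0; exact: sums_bounded0.
have -> : y - err (l + i.+1)%N - (y - err l) =
          g (err (l + i)%N) + (y - err (l + i)%N - (y - err l)).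
  by rewrite addnS /= opprB [in LHS]addrCA !addrA.
apply: sums_bounded_le (sums_boundedD (proj1 (hg _)) IH) _.
have := ler_wpM2l (ltW K0) (err_le (l + i)%N).
rewrite addnS halfpowS; lra.
Qed.

Lemma coord_limit (C : R) (w : nat -> X) : 0 <= C ->
  (forall l m, (l <= m)%N -> sums_bounded (w m - w l) (C * hp l)) ->
  exists d : nat -> R, forall k m, `|coord (w m) k - d k| * `|e k| <= C * hp m.
Proof.
move=> C0 hw.
suff limit k : exists dk, forall m, `|coord (w m) k - dk| * `|e k| <= C * hp m.
  by have [d hd] := choice limit; exists d.
have ek : 0 < `|e k| by rewrite normr_gt0 basis_vector_neq0.
have [dk hdk] : exists dk, forall m, `|coord (w m) k - dk| <= C * hp m / `|e k|.
  apply: cauchy_rate_limit => l m lm.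
    by rewrite ler_pdivlMr // -coordB; exact: sums_bounded_coord (hw l m lm).
  by rewrite ler_pM2r ?invr_gt0 // ler_wpM2l // halfpow_le.
by exists dk => m; rewrite -ler_pdivlMr.
Qed.

(* The limit coordinates d form an unconditional expansion of y: a partial
   sum over s is compared with w_m, with its partial sum over s, with the
   partial sum of w_L for L = m + size s, and finally with the sum of d. *)
Lemma limit_expansion (y : X) (C : R) (w : nat -> X) (d : nat -> R) : 0 <= C ->
  (forall m, `|y - w m| <= `|y| * hp m) ->
  (forall l m, (l <= m)%N -> sums_bounded (w m - w l) (C * hp l)) ->
  (forall k m, `|coord (w m) k - d k| * `|e k| <= C * hp m) ->
  unc_expansion e d y.
Proof.
move=> C0 hy hw hd eps eps0.
set A := `|y| + 2 * C + 1.
have A0 : 0 < A by rewrite /A; have := normr_ge0 y; lra.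
have [m hm] := halfpow_small (divr_gt0 eps0 (mulr_gt0 (ltr0Sn R 1) A0)).
have [s0 Hs0] := coordP basis (w m) (divr_gt0 eps0 (ltr0Sn R 1)).
exists s0 => s us sub; set L := (m + size s)%N.
have T1 := hy m.
have T2 : `|w m - psum s (w m)| < eps / 2 := Hs0 s us sub.
have T3 : `|psum s (w m) - psum s (w L)| <= C * hp m.
  by rewrite -psumB -opprB; apply: sums_boundedN (hw m L (leq_addr _ _)) s us.
have T4 : `|psum s (w L) - \sum_(n <- s) d n *: e n| <= C * hp m.
  rewrite /psum -sumrB; apply: le_trans (ler_norm_sum _ _ _) _.
  apply: (le_trans (y := \sum_(n <- s) C * hp L)).
    by apply: ler_sum => n _; rewrite -scalerBl normrZ.
  rewrite big_const_seq count_predT iter_addr addr0 -mulr_natl /L halfpowD.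
  rewrite (_ : _ * _ = C * hp m * ((size s)%:R * hp (size s))); last by ring.
  rewrite -[leRHS]mulr1 ler_wpM2l ?halfpow_size //.
  by rewrite mulr_ge0 // ltW // halfpow_gt0.
apply: le_lt_trans (ler_distD (w m) _ _) _.
apply: le_lt_trans (lerD (lexx _) (ler_distD (psum s (w m)) _ _)) _.
apply: le_lt_trans (lerD (lexx _) (lerD (lexx _) (ler_distD (psum s (w L)) _ _))) _.
have hA : A * hp m < eps / 2.
  by move: hm; rewrite ltr_pdivlMr ?mulr_gt0 // => hm; rewrite ltr_pdivlMr //; lra.
have := halfpow_gt0 R m; rewrite /A in hA; lra.
Qed.

(* The coordinate functionals are bounded: |x_k| |e_k| <= K |x|.  Apply the
   two previous lemmas to the decomposition of y and compare with w_0 = 0. *)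
Lemma coord_bound : exists K : R, 0 < K /\
  forall y k, `|coord y k| * `|e k| <= K * `|y|.
Proof.
have [C0 [C00 hdec]] := telescoping_decomposition.
exists C0; split => // y k.
have [w [w0 hyw hw]] := hdec y.
have Cy : 0 <= C0 * `|y| by rewrite mulr_ge0 // ltW.
have [d hd] := coord_limit Cy hw.
have := hd k 0%N; rewrite -(coordE basis (limit_expansion Cy hyw hw hd)).
by rewrite w0 coord0 sub0r normrN /halfpow expr0 mulr1.
Qed.

End coordinate_bound.

Section closed_bands.
Context {R : realType} {X : completeNormedModType R} {e : nat -> X}.
Hypothesis basis : unconditional_basis e.
Local Notation coord := (coord basis).
Local Notation vanishing_on := (vanishing_on basis).

Lemma coord_lipschitz : exists K : R, 0 < K /\
  forall x y k, `|coord x k - coord y k| * `|e k| <= K * `|x - y|.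
Proof.
have [K [K0 hK]] := coord_bound basis.
by exists K; split => // x y k; rewrite -coordB.
Qed.

(* The band is closed: a vector with x_k != 0 for some k in P lies at
   distance at least |x_k| |e_k| / K from it. *)
Lemma vanishing_closed P : closed (vanishing_on P).
Proof.
have [K [K0 hK]] := coord_lipschitz.
move=> x hx k Pk; apply: contrapT => /eqP xk.
have ek : 0 < `|e k| by rewrite normr_gt0 basis_vector_neq0.
have d0 : 0 < `|coord x k| * `|e k| / K by rewrite divr_gt0 // mulr_gt0 // normr_gt0.
have [x' [vx' bx']] := hx _ (nbhsx_ballx _ _ d0).
move: bx'; rewrite -ball_normE /ball_ /= ltr_pdivlMr // mulrC => bx'.
by have := le_lt_trans (hK x x' k) bx'; rewrite vx' // subr0 ltxx.
Qed.

(* If the matrix of T has no entries from columns outside P to rows in P,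
   then T leaves the band vanishing on P invariant: T maps the partial
   sums of x into the band, and these converge to x. *)
Lemma vanishing_invariant (T : {linear X -> X}) (a : nat -> nat -> R)
    (P : nat -> bool) :
  continuous T ->
  (forall m, unc_expansion e (fun n => a n m) (T (e m))) ->
  (forall j k : nat, P j -> ~~ P k -> a j k = 0) ->
  forall x, vanishing_on P x -> vanishing_on P (T x).
Proof.
move=> hT hA hP x vx j Pj.
have [K [K0 hK]] := coord_lipschitz.
have ej : 0 < `|e j| by rewrite normr_gt0 basis_vector_neq0.
apply/eqP; rewrite -normr_le0 -(pmulr_rle0 _ ej) mulrC.
apply/ler_addgt0Pr => eps eps0; rewrite add0r.
have eK : 0 < eps / K by rewrite divr_gt0.
have [r r0 hr] := (nbhs_ballP _ _).1 ((@cvgrPdist_lt _ _ _ (nbhs x) _ T (T x)).1 (hT x) _ eK).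
have [s0 Hs0] := coordP basis x r0.
set s := undup s0.
have near_Tx : `|T x - T (psum basis s x)| < eps / K.
  apply: hr; rewrite /= -ball_normE /ball_.
  by apply: Hs0 => [|z]; rewrite ?undup_uniq ?mem_undup.
have Tsum_j : coord (T (psum basis s x)) j = 0.
  rewrite /psum linear_sum coord_sum big1 // => n _.
  rewrite linearZ coordZ (coordE basis (hA n)).
  by case: (boolP (P n)) => Pn; [rewrite vx // mul0r | rewrite hP // mulr0].
have := hK (T x) (T (psum basis s x)) j; rewrite Tsum_j subr0 => /le_trans; apply.
by rewrite -ler_pdivlMl // mulrC ltW.
Qed.

Lemma band_nontrivial_invariant (T : {linear X -> X}) (a : nat -> nat -> R)
    (P : nat -> bool) i j :
  continuous T -> (forall m, unc_expansion e (fun n => a n m) (T (e m))) ->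
  (forall j k : nat, P j -> ~~ P k -> a j k = 0) -> ~~ P i -> P j ->
  exists M : set X, [/\ is_ideal e M, closed M, (forall x, M x -> M (T x)),
                        M <> [set 0] & M <> setT].
Proof.
move=> hT hA hP Pi Pj; exists (vanishing_on P); split.
- exact: vanishing_ideal.
- exact: vanishing_closed.
- exact: vanishing_invariant hT hA hP.
- move=> band0; have : vanishing_on P (e i).
    move=> k Pk; rewrite coord_basis_vector; case: eqP => // ki.
    by rewrite -ki Pk in Pi.
  by rewrite band0 => /eqP; rewrite (negbTE (basis_vector_neq0 basis i)).
- move=> bandT; have : vanishing_on P (e j) by rewrite bandT.
  by move=> /(_ j Pj); rewrite coord_basis_vector eqxx => /eqP; rewrite oner_eq0.
Qed.

End closed_bands.

(* Tridiagonal matrices decouple along a vanishing sub- or superdiagonal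
   entry: the blocks {k <= n} and {k > n} interact only through a_{n+1,n}
   and a_{n,n+1}. *)
Definition tridiagonal (R : zmodType) (a : nat -> nat -> R) : Prop :=
  forall n m : nat, (n.+1 < m)%N \/ (m.+1 < n)%N -> a n m = 0.

Lemma tridiagonal_lower_cut (R : zmodType) (a : nat -> nat -> R) n :
  tridiagonal a -> a n.+1 n = 0 ->
  forall j k : nat, (n < j)%N -> ~~ (n < k)%N -> a j k = 0.
Proof.
move=> htri h0 j k nj; rewrite -leqNgt => kn.
have [far|near] := ltnP k.+1 j; first by apply: htri; right.
have -> : j = n.+1 by lia.
by have -> : k = n by lia.
Qed.

Lemma tridiagonal_upper_cut (R : zmodType) (a : nat -> nat -> R) n :
  tridiagonal a -> a n n.+1 = 0 ->
  forall j k : nat, (j <= n)%N -> ~~ (k <= n)%N -> a j k = 0.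
Proof.
move=> htri h0 j k jn; rewrite -ltnNge => nk.
have [far|near] := ltnP j.+1 k; first by apply: htri; left.
have -> : j = n by lia.
by have -> : k = n.+1 by lia.
Qed.

Theorem corollary4p4 (R : realType) (X : completeNormedModType R)
  (e : nat -> X) (T : {linear X -> X}) (a : nat -> nat -> R) :
  unconditional_basis e ->
  continuous T ->
  (* a is the matrix of T w.r.t. e : T e_m = sum_n a n m e_n *)
  (forall m : nat, unc_expansion e (fun n => a n m) (T (e m))) ->
  (* T is positive *)
  (forall n m : nat, 0 <= a n m) ->
  (* the matrix is tridiagonal *)
  (forall n m : nat, (n.+1 < m)%N \/ (m.+1 < n)%N -> a n m = 0) ->
  ((~ exists M : set X,
       [/\ is_ideal e M, closed M, (forall x, M x -> M (T x)),
           M <> [set 0] & M <> setT])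
   <-> (forall n : nat, a n.+1 n != 0 /\ a n n.+1 != 0)).
Proof.
move=> basis hT hA _ htri; split => [no_ideal n | ha [M [hM hC hTM M0 MT]]].
- split; apply/eqP => a0; apply: no_ideal.
  + (* decouple along {k > n}, separating e_0 from e_(n+1) *)
    have Pi : ~~ (n < 0)%N by [].
    exact: (band_nontrivial_invariant basis (P := fun k => (n < k)%N) hT hA
              (tridiagonal_lower_cut htri a0) Pi (ltnSn n)).
  + (* decouple along {k <= n}, separating e_(n+1) from e_0 *)
    have Pi : ~~ (n.+1 <= n)%N by rewrite -ltnNge.
    exact: (band_nontrivial_invariant basis (P := fun k => (k <= n)%N) hT hA
              (tridiagonal_upper_cut htri a0) Pi (leq0n n)).
- exact: MT (invariant_ideal_full basis hA ha hM hC hTM M0).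
Qed.
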